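(* Fix $n\in\mathbb N$ and positive integers $m_1,m_2$. Let $\mathbf g_{kj}(t)$, $k,j\in\{1,2\}$, $t=1,\dots,n$, be complex random variables i.i.d. with a continuous distribution, $\mathbf G^n_{kj}$ the $n\times n$ diagonal matrix with diagonal entries $\mathbf g_{kj}(1),\dots,\mathbf g_{kj}(n)$, and $\mathbf V^n_1\in\mathbb C^{n\times m_1}$, $\mathbf V^n_2\in\mathbb C^{n\times m_2}$ matrices whose $t$-th rows $\vec{\mathbf v}_1(t)^\top,\vec{\mathbf v}_2(t)^\top$ are deterministic functions of $\mathcal G^{t-1}=\{\mathbf g_{kj}(s):k,j\in\{1,2\},s\le t-1\}$. Define the random set $\mathcal T=\{t\in\{1,\dots,n\}: [\vec{\mathbf v}_1(t)^\top\ \vec 0_{1\times m_2}]\in\mathrm{rowspan}[\mathbf G^{t-1}_{21}\mathbf V^{t-1}_1\ \ \mathbf G^{t-1}_{22}\mathbf V^{t-1}_2]\text{ and }[\vec 0_{1\times m_1}\ \vec{\mathbf v}_2(t)^\top]\in\mathrm{rowspan}[\mathbf G^{t-1}_{21}\mathbf V^{t-1}_1\ \ \mathbf G^{t-1}_{22}\mathbf V^{t-1}_2]\}$, and random integers $\mathbf r_1=\dim\mathrm{span}\{\vec s\in\mathbb C^{m_1}:\exists\vec l\in\mathbb C^n,\ [\vec s^\top\ \vec 0_{1\times m_2}]=\vec l^\top[\mathbf G^n_{21}\mathbf V^n_1\ \ \mathbf G^n_{22}\mathbf V^n_2]\}$ and $\mathbf r_2=\dim\mathrm{span}\{\vec s\in\mathbb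 C^{m_2}:\exists\vec l\in\mathbb C^n,\ [\vec 0_{1\times m_1}\ \vec s^\top]=\vec l^\top[\mathbf G^n_{21}\mathbf V^n_1\ \ \mathbf G^n_{22}\mathbf V^n_2]\}$. Then: (i) almost surely, $\mathrm{rank}[\mathbf G^n_{11}\mathbf V^n_1\ \ \mathbf G^n_{12}\mathbf V^n_2]-\mathrm{rank}[\mathbf G^n_{21}\mathbf V^n_1\ \ \mathbf G^n_{22}\mathbf V^n_2]\le\mathrm{rank}[\mathbf G^{\mathcal T}_{11}\mathbf V^{\mathcal T}_1\ \ \mathbf G^{\mathcal T}_{12}\mathbf V^{\mathcal T}_2]$; (ii) $\mathrm{rank}[\mathbf V^{\mathcal T}_j]\le\mathbf r_j$ for $j=1,2$; (iii) almost surely, $\mathbf r_j\le\mathrm{rank}[\mathbf G^n_{21}\mathbf V^n_1\ \ \mathbf G^n_{22}\mathbf V^n_2]-\mathrm{rank}[\mathbf V^n_{3-j}]$ for $j=1,2$.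
   Context: For $t\le n$, $\mathbf G^{t}_{kj}$ and $\mathbf V^{t}_j$ denote the leading $t\times t$ principal submatrix of $\mathbf G^n_{kj}$ and the first $t$ rows of $\mathbf V^n_j$; for $t=0$ the matrix $[\mathbf G^0_{21}\mathbf V^0_1\ \ \mathbf G^0_{22}\mathbf V^0_2]$ is the zero row (rank 0, rowspan $\{0\}$). For the random index set $\mathcal T$, $\mathbf V^{\mathcal T}_j$ is the submatrix of $\mathbf V^n_j$ consisting of the rows with indices in $\mathcal T$, and $\mathbf G^{\mathcal T}_{kj}$ is the $|\mathcal T|\times|\mathcal T|$ diagonal matrix with entries $\mathbf g_{kj}(t)$, $t\in\mathcal T$. *)

From HB Require Import structures.
From mathcomp Require Import all_boot all_order all_algebra.
From mathcomp Require Import all_classical all_reals all_analysis.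
From mathcomp Require Import complex.
Set Implicit Arguments. Unset Strict Implicit. Unset Printing Implicit Defensive.
Import Order.TTheory GRing.Theory Num.Theory.
Local Open Scope ring_scope.
Local Open Scope classical_set_scope.

(* Indices k, j in {1,2} of the paper are encoded as 'I_2 (0 <-> 1, 1 <-> 2);
   times t in {1..n} are encoded as 'I_n (t-1 <-> t).  A realization of all the
   g's is a function  x : 'I_2 -> 'I_2 -> 'I_n -> C. *)

Section Defs.
Variable R : realType.
Local Notation C := R[i].

(* complex number as a point of the measurable space R * R *)
Definition cpair (z : C) : R * R := (complex.Re z, complex.Im z).

Variable n : nat.

Definition Gmat (x : 'I_2 -> 'I_2 -> 'I_n -> C) (k j : 'I_2) : 'M[C]_n :=
  diag_mx (\row_t x k j t).

Definition Vmat m (f : 'I_n -> ('I_2 -> 'I_2 -> 'I_n -> C) -> 'rV[C]_m)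
  (x : 'I_2 -> 'I_2 -> 'I_n -> C) : 'M[C]_(n, m) := \matrix_(t < n) f t x.

Definition blk (x : 'I_2 -> 'I_2 -> 'I_n -> C) (k : 'I_2) m1 m2
  (V1 : 'M[C]_(n, m1)) (V2 : 'M[C]_(n, m2)) : 'M[C]_(n, m1 + m2) :=
  row_mx (Gmat x k 0 *m V1) (Gmat x k 1 *m V2).

Definition lead_sq (t : 'I_n) (M : 'M[C]_n) : 'M[C]_t :=
  \matrix_(i, j) M (widen_ord (ltnW (ltn_ord t)) i) (widen_ord (ltnW (ltn_ord t)) j).
Definition lead_rows (t : 'I_n) m (M : 'M[C]_(n, m)) : 'M[C]_(t, m) :=
  \matrix_(i, j) M (widen_ord (ltnW (ltn_ord t)) i) j.

(* [G^t_{21} V^t_1  G^t_{22} V^t_2]  (t rows: the times strictly before t) *)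
Definition lead_blk (x : 'I_2 -> 'I_2 -> 'I_n -> C) (t : 'I_n) m1 m2
  (V1 : 'M[C]_(n, m1)) (V2 : 'M[C]_(n, m2)) : 'M[C]_(t, m1 + m2) :=
  row_mx (lead_sq t (Gmat x 1 0) *m lead_rows t V1)
         (lead_sq t (Gmat x 1 1) *m lead_rows t V2).

Definition Tset (x : 'I_2 -> 'I_2 -> 'I_n -> C) m1 m2
  (V1 : 'M[C]_(n, m1)) (V2 : 'M[C]_(n, m2)) : {set 'I_n} :=
  [set t : 'I_n | (row_mx (row t V1) (0 : 'rV[C]_m2) <= lead_blk x t V1 V2)%MS
                && (row_mx (0 : 'rV[C]_m1) (row t V2) <= lead_blk x t V1 V2)%MS].

Definition sub_rows (A : {set 'I_n}) m (M : 'M[C]_(n, m)) : 'M[C]_(#|A|, m) :=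
  \matrix_(i, j) M (enum_val i) j.
Definition sub_G (A : {set 'I_n}) (x : 'I_2 -> 'I_2 -> 'I_n -> C) (k j : 'I_2)
  : 'M[C]_#|A| := diag_mx (\row_i x k j (enum_val i)).

Definition sub_blk (A : {set 'I_n}) (x : 'I_2 -> 'I_2 -> 'I_n -> C) m1 m2
  (V1 : 'M[C]_(n, m1)) (V2 : 'M[C]_(n, m2)) : 'M[C]_(#|A|, m1 + m2) :=
  row_mx (sub_G A x 0 0 *m sub_rows A V1) (sub_G A x 0 1 *m sub_rows A V2).

End Defs.
Arguments cpair {R}.

(* dimension of the span of a set S of row vectors: the least rank of a
   subspace (matrix row space) containing S, i.e. the dimension of the smallest
   subspace containing S. *)
Section DimSpan.
Variable F : fieldType.

Lemma span_dim_ex m (S : set 'rV[F]_m) :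
  exists k, `[< exists U : 'M[F]_m, \rank U = k /\ forall s, S s -> (s <= U)%MS >].
Proof.
exists m; apply/asboolP; exists 1%:M; split; first exact: mxrank1.
by move=> s _; exact: submx1.
Qed.

Definition span_dim m (S : set 'rV[F]_m) : nat := ex_minn (span_dim_ex S).
End DimSpan.

Section Prob.
Variables (R : realType) (d : measure_display) (Omega : measurableType d).
Variable P : probability Omega R.
Variable n : nat.
Local Notation C := R[i].
Variable g : 'I_2 -> 'I_2 -> 'I_n -> Omega -> C.

Definition gsample (w : Omega) : 'I_2 -> 'I_2 -> 'I_n -> C := fun k j t => g k j t w.

(* the g k j t are (measurable) complex random variables, mutually independent,
   identically distributed, with a continuous (atomless) distribution *)
Definition iid_continuous : Prop :=
  [/\ (forall (k j : 'I_2) (t : 'I_n), measurable_fun setT (cpair \o g k j t)),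
      (forall B : 'I_2 -> 'I_2 -> 'I_n -> set (R * R)%type,
         (forall (k j : 'I_2) (t : 'I_n), measurable (B k j t)) ->
         fine (P [set w | forall (k j : 'I_2) (t : 'I_n), B k j t (cpair (g k j t w))]) =
         \prod_(k < 2) \prod_(j < 2) \prod_(t < n)
            fine (P ((cpair \o g k j t) @^-1` B k j t))),
      (forall (k j : 'I_2) (t : 'I_n) (k' j' : 'I_2) (t' : 'I_n) (B : set (R * R)%type), measurable B ->
         P ((cpair \o g k j t) @^-1` B) = P ((cpair \o g k' j' t') @^-1` B))
    & (forall (k j : 'I_2) (t : 'I_n) (z : C), P [set w | g k j t w = z] = 0%E)].

(* sigma-algebra generated by G^{t-1} = { g k j s : s < t } (0-based times) *)
Definition past_events (t : 'I_n) : set (set Omega) :=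
  [set A | exists (k j : 'I_2) (s : 'I_n), (s < t)%N /\
     exists B : set (R * R)%type, measurable B /\ A = (cpair \o g k j s) @^-1` B].

Definition causal m (f : 'I_n -> ('I_2 -> 'I_2 -> 'I_n -> C) -> 'rV[C]_m) : Prop :=
  forall (t : 'I_n) (x y : 'I_2 -> 'I_2 -> 'I_n -> C),
    (forall (k j : 'I_2) (s : 'I_n), (s < t)%N -> x k j s = y k j s) -> f t x = f t y.

Definition adapted m (f : 'I_n -> ('I_2 -> 'I_2 -> 'I_n -> C) -> 'rV[C]_m) : Prop :=
  forall (t : 'I_n) (i : 'I_m) (B : set (R * R)%type), measurable B ->
    <<s past_events t >> ((fun w => cpair (f t (gsample w) 0 i)) @^-1` B).

End Prob.

From HB Require Import structures.
From mathcomp Require Import all_boot all_order all_algebra.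
From mathcomp Require Import all_classical all_reals all_analysis.
From mathcomp Require Import complex measurable_realfun zify.
Import Order.TTheory GRing.Theory Num.Theory.
Local Open Scope ring_scope.
Local Open Scope classical_set_scope.
Set Implicit Arguments. Unset Strict Implicit. Unset Printing Implicit Defensive.

(* Part (i): every time t outside T almost surely contributes a new dimension to the row
   space of M2 = [G21 V1  G22 V2], so |T^c| <= rank M2, while rank M1 is at most the rank of
   its rows indexed by T plus |T^c|.
   Row t of M2 is g21(t) [v1(t) 0] + g22(t) [0 v2(t)]; the two padded rows and the earlier
   rows of M2 are functions of variables independent of g22(t), and for t outside T they do
   not both lie in the span of the earlier rows.  The combination can then lie in that span
   only if g21(t) = 0 or g22(t) takes one particular value, an event of probability zero
   because the distribution is atomless.
   Part (ii): the rows of V_j^T are among the vectors whose span has dimension r_j.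
   Part (iii): rank-nullity for the projection of the row space of M2 onto one block of
   columns, G22 and G21 being almost surely invertible. *)

Section RankLemmas.
Variable F : fieldType.

Definition prefix_rows (k : nat) m n (M : 'M[F]_(m, n)) : 'M[F]_(m, n) :=
  \matrix_(i, j) (if (i < k)%N then M i j else 0).

Lemma row_prefix_rows k m n (M : 'M[F]_(m, n)) i :
  row i (prefix_rows k M) = if (i < k)%N then row i M else 0.
Proof. by apply/rowP => j; rewrite !mxE; case: ifP; rewrite ?mxE. Qed.

Lemma prefix_rows_subS k l m n (M : 'M[F]_(m, n)) :
  (k <= l)%N -> (prefix_rows k M <= prefix_rows l M)%MS.
Proof.
move=> kl; apply/row_subP => i; rewrite row_prefix_rows.
case: ifP => ik; last exact: sub0mx.
have -> : row i M = row i (prefix_rows l M) by rewrite row_prefix_rows (leq_trans ik kl).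
exact: row_sub.
Qed.

Lemma prefix_rows0 m n (M : 'M[F]_(m, n)) : prefix_rows 0 M = 0.
Proof. by apply/matrixP => i j; rewrite !mxE. Qed.

Lemma prefix_rows_id k m n (M : 'M[F]_(m, n)) : (m <= k)%N -> prefix_rows k M = M.
Proof. by move=> mk; apply/matrixP => i j; rewrite mxE (leq_trans (ltn_ord i) mk). Qed.

Lemma prefix_rows_sub k m n (M : 'M[F]_(m, n)) : (prefix_rows k M <= M)%MS.
Proof.
rewrite -[X in (_ <= X)%MS](@prefix_rows_id (maxn k m) _ _ M (leq_maxr k m)).
exact/prefix_rows_subS/leq_maxl.
Qed.

Lemma mxrank_prefix_rowsS m n (M : 'M[F]_(m, n)) (t : 'I_m) :
  ~~ (row t M <= prefix_rows t M)%MS ->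
  (\rank (prefix_rows t M) < \rank (prefix_rows t.+1 M))%N.
Proof.
move=> fresh; suff : (prefix_rows t M < prefix_rows t.+1 M)%MS by rewrite ltmxErank => /andP[].
rewrite ltmxE prefix_rows_subS //=; apply: contra fresh => /(submx_trans _); apply.
by rewrite -[row t M](_ : row t (prefix_rows t.+1 M) = _) ?row_sub // row_prefix_rows ltnSn.
Qed.

Lemma card_fresh_rows_le_mxrank m n (M : 'M[F]_(m, n)) (S : {set 'I_m}) :
  {in S, forall t, ~~ (row t M <= prefix_rows t M)%MS} -> (#|S| <= \rank M)%N.
Proof.
move=> freshS; pose r k := \rank (prefix_rows k M).
have r_mono : {homo r : k l / (k <= l)%N} by move=> k l kl; exact/mxrankS/prefix_rows_subS.
rewrite -sum1_card big_mkcond /=.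
apply: (@leq_trans (\sum_(t < m) (r t.+1 - r t))%N).
  by apply: leq_sum => t _; case: ifP => // tS; rewrite subn_gt0 mxrank_prefix_rowsS ?freshS.
rewrite -(big_mkord xpredT (fun k => (r k.+1 - r k)%N)) telescope_sumn //.
by rewrite /r prefix_rows0 mxrank0 subn0 prefix_rows_id.
Qed.

Lemma mxrank_le_rowsub_add_card m n (M : 'M[F]_(m, n)) (A : {set 'I_m}) :
  (\rank M <= \rank (rowsub (enum_val : 'I_#|A| -> 'I_m) M) + #|~: A|)%N.
Proof.
have row_rowsub_enum (B : {set 'I_m}) i :
    i \in B -> (row i M <= rowsub (enum_val : 'I_#|B| -> 'I_m) M)%MS.
  by move=> iB; rewrite -(enum_rankK_in iB iB) -row_rowsub row_sub.
have M_sub : (M <= rowsub (enum_val : 'I_#|A| -> 'I_m) M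
                 + rowsub (enum_val : 'I_#|~: A| -> 'I_m) M)%MS.
  apply/row_subP => i; case: (boolP (i \in A)) => iA.
    exact/(submx_trans (row_rowsub_enum A i iA))/addsmxSl.
  by apply/(submx_trans (row_rowsub_enum (~: A) i _))/addsmxSr; rewrite inE.
apply: leq_trans (mxrankS M_sub) _; apply: leq_trans (mxrank_adds_leqif _ _).1 _.
by rewrite leq_add2l rank_leq_row.
Qed.

Lemma mxrank_diag_mul n m (d : 'rV[F]_n) (V : 'M[F]_(n, m)) :
  (forall i, d 0 i != 0) -> \rank (diag_mx d *m V) = \rank V.
Proof.
move=> d_neq0; rewrite -mxrank_tr trmx_mul mxrankMfree ?mxrank_tr //.
by rewrite tr_diag_mx row_free_unit unitmxE det_diag unitfE; apply/prodf_neq0.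
Qed.

Lemma span_dim_le_mxrank m (S : set 'rV[F]_m) p (U : 'M[F]_(p, m)) :
  (forall s, S s -> (s <= U)%MS) -> (span_dim S <= \rank U)%N.
Proof.
move=> SU; rewrite /span_dim; case: ex_minnP => k _; apply.
by apply/asboolP; exists <<U>>%MS; rewrite genmxE; split => // s /SU; rewrite genmxE.
Qed.

Lemma mxrank_le_span_dim m (S : set 'rV[F]_m) p (U : 'M[F]_(p, m)) :
  (forall i, S (row i U)) -> (\rank U <= span_dim S)%N.
Proof.
move=> SU; rewrite /span_dim; case: ex_minnP => k /asboolP[W [<- SW]] _.
by apply: mxrankS; apply/row_subP => i; apply: SW.
Qed.

Lemma span_dim_add_mxrank_le k p q n (S : set 'rV[F]_k) (M : 'M[F]_(n, p))
    (E : 'M[F]_(k, p)) (E' : 'M[F]_(p, k)) (Q : 'M[F]_(p, q)) :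
  E *m E' = 1%:M -> E *m Q = 0 -> (forall s, S s -> (s *m E <= M)%MS) ->
  (span_dim S + \rank (M *m Q) <= \rank M)%N.
Proof.
move=> EE' EQ SM; rewrite -[leqRHS](mxrank_mul_ker M Q) addnC leq_add2l.
apply: leq_trans (mxrankM_maxl _ E'); apply: span_dim_le_mxrank => s Ss.
rewrite -[s]mulmx1 -EE' mulmxA submxMr // sub_capmx SM //=.
by apply/sub_kermxP; rewrite -mulmxA EQ mulmx0.
Qed.

Lemma span_dim_left_block_add_mxrank n m1 m2 (A : 'M[F]_(n, m1)) (B : 'M[F]_(n, m2)) :
  (span_dim [set s : 'rV[F]_m1 | exists l : 'rV[F]_n, row_mx s 0 = l *m row_mx A B]
     + \rank B <= \rank (row_mx A B))%N.
Proof.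
have := @span_dim_add_mxrank_le _ _ _ _ _ (row_mx A B)
  (row_mx 1%:M 0) (col_mx 1%:M 0) (col_mx 0 1%:M).
rewrite !mul_row_col !mulmx0 !mul0mx !mulmx1 !add0r !addr0; apply => // s [l sl].
by rewrite mul_mx_row mulmx1 mulmx0 sl submxMl.
Qed.

Lemma span_dim_right_block_add_mxrank n m1 m2 (A : 'M[F]_(n, m1)) (B : 'M[F]_(n, m2)) :
  (span_dim [set s : 'rV[F]_m2 | exists l : 'rV[F]_n, row_mx 0 s = l *m row_mx A B]
     + \rank A <= \rank (row_mx A B))%N.
Proof.
have := @span_dim_add_mxrank_le _ _ _ _ _ (row_mx A B)
  (row_mx 0 1%:M) (col_mx 0 1%:M) (col_mx 1%:M 0).
rewrite !mul_row_col !mulmx0 !mul0mx !mulmx1 !add0r !addr0; apply => // s [l sl].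
by rewrite mul_mx_row mulmx1 mulmx0 sl submxMl.
Qed.

End RankLemmas.

Section BorderedMinors.
Variable F : fieldType.

Lemma colsub_col_mx m1 m2 n p (h : 'I_p -> 'I_n) (A : 'M[F]_(m1, n)) (B : 'M[F]_(m2, n)) :
  colsub h (col_mx A B) = col_mx (colsub h A) (colsub h B).
Proof. by apply/matrixP => i j; rewrite !mxE; case: splitP => k _; rewrite !mxE. Qed.

Lemma colsub_lincomb m n p (h : 'I_p -> 'I_n) (u v : 'M[F]_(m, n)) (a b : F) :
  colsub h (a *: u + b *: v) = a *: colsub h u + b *: colsub h v.
Proof. by apply/matrixP => i j; rewrite !mxE. Qed.

Lemma det_col_mx_linear r (A : 'M[F]_(r, r + 1)) (u v : 'rV[F]_(r + 1)) (a b : F) :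
  \det (col_mx A (a *: u + b *: v)) = a * \det (col_mx A u) + b * \det (col_mx A v).
Proof.
pose i0 := rshift r (ord0 : 'I_1).
have row'_last (x y : 'rV[F]_(r + 1)) : row' i0 (col_mx A x) = row' i0 (col_mx A y).
  apply/matrixP => k j; rewrite !mxE; case: splitP => // k' lift_k.
  have lift_i0 : lift i0 k = i0 by apply: val_inj; apply: etrans lift_k _; rewrite (ord1 k').
  by move: (neq_lift i0 k); rewrite lift_i0 eqxx.
apply: (determinant_multilinear (i0 := i0)); rewrite ?row'_last //.
by rewrite /i0 !rowKd !row_id.
Qed.

Definition bordered_minor r m n (A : 'M[F]_(n, m))
    (f : 'I_r -> 'I_n) (h : 'I_(r + 1) -> 'I_m) (x : 'rV[F]_m) : F :=
  \det (colsub h (col_mx (rowsub f A) x)).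

Lemma bordered_minor_linear r m n (A : 'M[F]_(n, m)) f h (u v : 'rV[F]_m) (a b : F) :
  @bordered_minor r m n A f h (a *: u + b *: v) =
  a * bordered_minor A f h u + b * bordered_minor A f h v.
Proof. by rewrite /bordered_minor !colsub_col_mx colsub_lincomb det_col_mx_linear. Qed.

Lemma bordered_minor_eq0 r m n (A : 'M[F]_(n, m)) f h (x : 'rV[F]_m) :
  (\rank A <= r)%N -> (x <= A)%MS -> @bordered_minor r m n A f h x = 0.
Proof.
move=> rA xA; rewrite /bordered_minor.
have rank_le : (\rank (colsub h (col_mx (rowsub f A) x)) <= r)%N.
  rewrite -[X in colsub h X]mulmx1 -mulmx_colsub; apply: leq_trans (mxrankM_maxl _ _) _.
  by apply: leq_trans rA; apply: mxrankS; rewrite col_mx_sub rowsub_sub.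
apply: contraTeq rank_le; rewrite -unitfE -unitmxE => /mxrank_unit ->.
by rewrite addn1 ltnn.
Qed.

Lemma bordered_minor_neq0 m n (A : 'M[F]_(n, m)) (x : 'rV[F]_m) : ~~ (x <= A)%MS ->
  exists h : {ffun 'I_(\rank A + 1) -> 'I_m}, bordered_minor A (maxrankfun A) h x != 0.
Proof.
move=> xA; set Y := col_mx (rowsub (maxrankfun A) A) x.
have rankY : \rank Y = (\rank A + 1)%N.
  apply/eqP; rewrite eqn_leq rank_leq_row /= -addsmxE.
  have : (rowsub (maxrankfun A) A < (rowsub (maxrankfun A) A + x)%MS)%MS.
    rewrite ltmxE addsmxSl /=; apply: contra xA => /(submx_trans (addsmxSr _ _)).
    by rewrite eq_maxrowsub.
  by rewrite ltmxErank => /andP[_]; rewrite eq_maxrowsub addn1.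
have fullYt : row_full Y^T by rewrite /row_full mxrank_tr rankY.
exists (fullrankfun fullYt); rewrite /bordered_minor -/Y -unitfE -unitmxE -unitmx_tr.
have -> : (colsub (fullrankfun fullYt) Y)^T = rowsub (fullrankfun fullYt) Y^T.
  by apply/matrixP => i j; rewrite !mxE.
exact: fullrowsub_unit.
Qed.

(* Expressing span membership through finitely many minors turns the events of part (i)
   into measurable ones. *)
Lemma bordered_minors_dependent m n (A : 'M[F]_(n, m)) (u v : 'rV[F]_m) (a b : F) :
  ((a *: u + b *: v)%R <= A)%MS -> ~~ ((u <= A)%MS && (v <= A)%MS) ->
  exists r (f : {ffun 'I_r -> 'I_n}) (h : {ffun 'I_(r + 1) -> 'I_m}),
    (bordered_minor A f h u != 0 \/ bordered_minor A f h v != 0) /\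
    a * bordered_minor A f h u + b * bordered_minor A f h v = 0.
Proof.
move=> combA uvA; exists (\rank A), (maxrankfun A).
have comb0 h : a * bordered_minor A (maxrankfun A) h u +
               b * bordered_minor A (maxrankfun A) h v = 0.
  by rewrite -bordered_minor_linear bordered_minor_eq0.
case: (boolP (u <= A)%MS) => uA.
  have vA : ~~ (v <= A)%MS by rewrite uA in uvA.
  have [h vh] := bordered_minor_neq0 vA.
  by exists h; split; [right|].
by have [h uh] := bordered_minor_neq0 uA; exists h; split; [left|].
Qed.

End BorderedMinors.

Section BlockMatrices.
Variables (R : realType) (n m1 m2 : nat).
Local Notation C := R[i].
Variables (x : 'I_2 -> 'I_2 -> 'I_n -> C) (V1 : 'M[C]_(n, m1)) (V2 : 'M[C]_(n, m2)).

Lemma blkE k : blk x k V1 V2 =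
  row_mx (\matrix_(i, j) (x k 0 i * V1 i j)) (\matrix_(i, j) (x k 1 i * V2 i j)).
Proof. by rewrite /blk /Gmat !mul_diag_mx; congr row_mx; apply/matrixP => i j; rewrite !mxE. Qed.

Lemma row_blk k t : row t (blk x k V1 V2) =
  x k 0 t *: row_mx (row t V1) 0 + x k 1 t *: row_mx 0 (row t V2).
Proof.
apply/rowP => j; rewrite blkE !mxE.
by case: (fintype.split j) => i; rewrite !mxE ?mulr0 ?addr0 ?add0r.
Qed.

Lemma row_lead_blk (t : 'I_n) (i : 'I_t) :
  row i (lead_blk x t V1 V2) = row (widen_ord (ltnW (ltn_ord t)) i) (blk x 1 V1 V2).
Proof.
have lead_mul p (d : 'rV[C]_n) (V : 'M[C]_(n, p)) :
    row i (lead_sq t (diag_mx d) *m lead_rows t V) =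
    row (widen_ord (ltnW (ltn_ord t)) i) (diag_mx d *m V).
  have -> : lead_sq t (diag_mx d) = diag_mx (\row_k d 0 (widen_ord (ltnW (ltn_ord t)) k)).
    by apply/matrixP => k l; rewrite !mxE; congr (_ *+ _); rewrite -val_eqE /= val_eqE.
  by rewrite !mul_diag_mx; apply/rowP => j; rewrite !mxE.
by rewrite /lead_blk /blk /Gmat !row_row_mx !lead_mul.
Qed.

Lemma submx_lead_blkE (t : 'I_n) p (u : 'M[C]_(p, m1 + m2)) :
  (u <= lead_blk x t V1 V2)%MS = (u <= prefix_rows t (blk x 1 V1 V2))%MS.
Proof.
suff -> : (lead_blk x t V1 V2 :=: prefix_rows t (blk x 1 V1 V2))%MS by [].
apply/eqmxP/andP; split; apply/row_subP => i.
  rewrite row_lead_blk; set i' := widen_ord _ i.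
  have <- : row i' (prefix_rows t (blk x 1 V1 V2)) = row i' (blk x 1 V1 V2).
    by rewrite row_prefix_rows /= ltn_ord.
  exact: row_sub.
rewrite row_prefix_rows; case: ifP => it; last exact: sub0mx.
have -> : i = widen_ord (ltnW (ltn_ord t)) (Ordinal it) by apply/val_inj.
by rewrite -row_lead_blk row_sub.
Qed.

Lemma sub_blkE (A : {set 'I_n}) : sub_blk A x V1 V2 = sub_rows A (blk x 0 V1 V2).
Proof.
rewrite /sub_blk /sub_G !mul_diag_mx blkE; apply/matrixP => i j; rewrite !mxE.
by case: (fintype.split j) => k; rewrite !mxE.
Qed.

Local Notation T := (Tset x V1 V2).

Lemma mxrank_blk_le_Tset :
  {in ~: T, forall t, ~~ (row t (blk x 1%R V1 V2) <= prefix_rows t (blk x 1%R V1 V2))%MS} ->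
  (\rank (blk x 0%R V1 V2) <= \rank (sub_blk T x V1 V2) + \rank (blk x 1%R V1 V2))%N.
Proof.
move=> fresh; rewrite sub_blkE; apply: leq_trans (mxrank_le_rowsub_add_card _ T) _.
by rewrite leq_add2l; exact: card_fresh_rows_le_mxrank.
Qed.

Lemma mxrank_sub_rows_Tset_left : (\rank (sub_rows T V1) <=
  span_dim [set s | exists l : 'rV[C]_n, row_mx s (0%R : 'rV[C]_m2) = l *m blk x 1%R V1 V2])%N.
Proof.
apply: mxrank_le_span_dim => i; move: (enum_valP i); rewrite inE submx_lead_blkE.
case/andP=> in_span _; have /submxP[l lE] := submx_trans in_span (prefix_rows_sub _ _).
by exists l; rewrite -lE; congr row_mx; apply/rowP => j; rewrite !mxE.
Qed.

Lemma mxrank_sub_rows_Tset_right : (\rank (sub_rows T V2) <=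
  span_dim [set s | exists l : 'rV[C]_n, row_mx (0%R : 'rV[C]_m1) s = l *m blk x 1%R V1 V2])%N.
Proof.
apply: mxrank_le_span_dim => i; move: (enum_valP i); rewrite inE !submx_lead_blkE.
case/andP=> _ in_span; have /submxP[l lE] := submx_trans in_span (prefix_rows_sub _ _).
by exists l; rewrite -lE; congr row_mx; apply/rowP => j; rewrite !mxE.
Qed.

Hypothesis x2_neq0 : forall (k : 'I_2) (t : 'I_n), x 1 k t != 0.

Lemma span_dim_left_add_mxrank_blk : (span_dim
  [set s | exists l : 'rV[C]_n, row_mx s (0%R : 'rV[C]_m2) = l *m blk x 1%R V1 V2]
  + \rank V2 <= \rank (blk x 1%R V1 V2))%N.
Proof.
rewrite -[X in (_ + X <= _)%N](@mxrank_diag_mul _ _ _ (\row_t x 1 1 t)) => [|t].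
  exact: span_dim_left_block_add_mxrank.
by rewrite mxE.
Qed.

Lemma span_dim_right_add_mxrank_blk : (span_dim
  [set s | exists l : 'rV[C]_n, row_mx (0%R : 'rV[C]_m1) s = l *m blk x 1%R V1 V2]
  + \rank V1 <= \rank (blk x 1%R V1 V2))%N.
Proof.
rewrite -[X in (_ + X <= _)%N](@mxrank_diag_mul _ _ _ (\row_t x 1 0 t)) => [|t].
  exact: span_dim_right_block_add_mxrank.
by rewrite mxE.
Qed.

End BlockMatrices.

Section ComplexMeasurability.
Variable R : realType.
Local Notation C := R[i].

Definition toC (p : R * R) : C := (p.1 +i* p.2)%C.

Lemma cpairK : cancel cpair toC. Proof. by case. Qed.
Lemma toCK : cancel toC cpair. Proof. by case. Qed.

Lemma complex_ReD (x y : C) : complex.Re (x + y) = complex.Re x + complex.Re y.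
Proof. by case: x; case: y. Qed.
Lemma complex_ImD (x y : C) : complex.Im (x + y) = complex.Im x + complex.Im y.
Proof. by case: x; case: y. Qed.
Lemma complex_ReM (x y : C) :
  complex.Re (x * y) = complex.Re x * complex.Re y - complex.Im x * complex.Im y.
Proof. by case: x; case: y. Qed.
Lemma complex_ImM (x y : C) :
  complex.Im (x * y) = complex.Re x * complex.Im y + complex.Im x * complex.Re y.
Proof. by case: x; case: y. Qed.

Context d (T : measurableType d).

Definition cmeasurable (h : T -> C) := measurable_fun setT (fun x => cpair (h x)).

Lemma cmeasurableP (h : T -> C) : cmeasurable h <->
  measurable_fun setT (fun x => complex.Re (h x)) /\
  measurable_fun setT (fun x => complex.Im (h x)).
Proof. exact: (measurable_fun_pairP (fun x => cpair (h x))). Qed.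

Lemma cmeasurable_cst c : cmeasurable (fun _ => c).
Proof. exact: measurable_cst. Qed.

Lemma cmeasurableD h1 h2 : cmeasurable h1 -> cmeasurable h2 ->
  cmeasurable (fun x => h1 x + h2 x).
Proof.
move=> /cmeasurableP[Re1 Im1] /cmeasurableP[Re2 Im2]; apply/cmeasurableP; split.
  by under eq_fun do rewrite complex_ReD; exact: measurable_funD.
by under eq_fun do rewrite complex_ImD; exact: measurable_funD.
Qed.

Lemma cmeasurableM h1 h2 : cmeasurable h1 -> cmeasurable h2 ->
  cmeasurable (fun x => h1 x * h2 x).
Proof.
move=> /cmeasurableP[Re1 Im1] /cmeasurableP[Re2 Im2]; apply/cmeasurableP; split.
  by under eq_fun do rewrite complex_ReM; apply: measurable_funB; exact: measurable_funM.
by under eq_fun do rewrite complex_ImM; apply: measurable_funD; exact: measurable_funM.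
Qed.

Lemma cmeasurable_sum (I : Type) (s : seq I) (F : I -> T -> C) :
  (forall i, cmeasurable (F i)) -> cmeasurable (fun x => \sum_(i <- s) F i x).
Proof.
move=> mF; elim: s => [|i s IH]; first by under eq_fun do rewrite big_nil; exact: cmeasurable_cst.
by under eq_fun do rewrite big_cons; exact: cmeasurableD.
Qed.

Lemma cmeasurable_prod (I : Type) (s : seq I) (F : I -> T -> C) :
  (forall i, cmeasurable (F i)) -> cmeasurable (fun x => \prod_(i <- s) F i x).
Proof.
move=> mF; elim: s => [|i s IH]; first by under eq_fun do rewrite big_nil; exact: cmeasurable_cst.
by under eq_fun do rewrite big_cons; exact: cmeasurableM.
Qed.

Lemma cmeasurable_toC (p : T -> R * R) :
  measurable_fun setT p -> cmeasurable (fun x => toC (p x)).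
Proof. by move=> mp; rewrite /cmeasurable; under eq_fun do rewrite toCK. Qed.

Lemma measurable_cmeasurable_eq0 (h : T -> C) :
  cmeasurable h -> measurable [set x | h x = 0].
Proof.
move=> mh; have -> : [set x | h x = 0] =
    setT `&` (fun x => cpair (h x)) @^-1` ([set 0] `*` [set 0]).
  apply/seteqP; split => x /=; first by move=> ->.
  by move=> [_ [/= Re0 Im0]]; rewrite -[h x]cpairK /toC /cpair Re0 Im0.
by apply: mh => //; apply: measurableX; exact: measurable_set1.
Qed.

Definition mx_cmeasurable p q (M : T -> 'M[C]_(p, q)) :=
  forall i j, cmeasurable (fun x => M x i j).

Lemma cmeasurable_det k (M : T -> 'M[C]_k) :
  mx_cmeasurable M -> cmeasurable (fun x => \det (M x)).
Proof.
move=> mM; rewrite /determinant; apply: cmeasurable_sum => s.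
by apply: cmeasurableM; [exact: cmeasurable_cst | apply: cmeasurable_prod => i; exact: mM].
Qed.

Lemma mx_cmeasurable_colsub p q q' (h : 'I_q' -> 'I_q) (M : T -> 'M[C]_(p, q)) :
  mx_cmeasurable M -> mx_cmeasurable (fun x => colsub h (M x)).
Proof. by move=> mM i j; under eq_fun do rewrite mxE; exact: mM. Qed.

Lemma mx_cmeasurable_rowsub p p' q (f : 'I_p' -> 'I_p) (M : T -> 'M[C]_(p, q)) :
  mx_cmeasurable M -> mx_cmeasurable (fun x => rowsub f (M x)).
Proof. by move=> mM i j; under eq_fun do rewrite mxE; exact: mM. Qed.

Lemma mx_cmeasurable_col_mx p1 p2 q (M1 : T -> 'M[C]_(p1, q)) (M2 : T -> 'M[C]_(p2, q)) :
  mx_cmeasurable M1 -> mx_cmeasurable M2 -> mx_cmeasurable (fun x => col_mx (M1 x) (M2 x)).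
Proof.
move=> mM1 mM2 i j; under eq_fun do rewrite mxE.
by case: (fintype.split i) => k; [exact: mM1 | exact: mM2].
Qed.

Lemma cmeasurable_bordered_minor r m n (A : T -> 'M[C]_(n, m)) (f : 'I_r -> 'I_n)
    (h : 'I_(r + 1) -> 'I_m) (x : T -> 'rV[C]_m) :
  mx_cmeasurable A -> mx_cmeasurable x ->
  cmeasurable (fun w => bordered_minor (A w) f h (x w)).
Proof.
move=> mA mx; apply: cmeasurable_det; apply: mx_cmeasurable_colsub.
by apply: mx_cmeasurable_col_mx => //; exact: mx_cmeasurable_rowsub.
Qed.

End ComplexMeasurability.

Section Independence.
Context (R : realType) d (Omega : measurableType d) (P : probability Omega R).
Context (n : nat) (g : 'I_2 -> 'I_2 -> 'I_n -> Omega -> R[i]).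
Hypothesis g_iid : iid_continuous P g.

(* The variables that row t of M2 and the rows before it depend on, apart from g22(t);
   index 1 stands for the paper's index 2. *)
Definition observed (t : 'I_n) (k j : 'I_2) (s : 'I_n) : bool :=
  (s < t)%N || [&& k == 1, j == 0 & s == t].

Definition grect (B : 'I_2 -> 'I_2 -> 'I_n -> set (R * R)) : set Omega :=
  [set w | forall k j s, B k j s (cpair (g k j s w))].

Definition observed_rects (t : 'I_n) : set (set Omega) :=
  [set A | exists B : 'I_2 -> 'I_2 -> 'I_n -> set (R * R),
     [/\ (forall k j s, measurable (B k j s)),
         (forall k j s, ~~ observed t k j s -> B k j s = setT) & A = grect B]].

Local Notation G22 t := (fun w => cpair (g 1 1 t w)).

Lemma measurable_g k j s : measurable_fun setT (fun w => cpair (g k j s w)).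
Proof. by case: g_iid => mg _ _ _; exact: mg. Qed.

Lemma g_atomless k j s z : P [set w | g k j s w = z] = 0%E.
Proof. by case: g_iid => _ _ _; apply. Qed.

Lemma measurable_grect B : (forall k j s, measurable (B k j s)) -> measurable (grect B).
Proof.
move=> mB; have -> : grect B = \bigcap_(i in [set: 'I_2 * 'I_2 * 'I_n])
    ((fun w => cpair (g i.1.1 i.1.2 i.2 w)) @^-1` B i.1.1 i.1.2 i.2).
  apply/seteqP; split => w /=; first by move=> Bw [[k j] s] _; exact: Bw.
  by move=> Bw k j s; exact: (Bw (k, j, s)).
apply: fin_bigcap_measurable; first exact: finite_finset.
by move=> [[k j] s] _ /=; rewrite -[X in measurable X]setTI; exact: measurable_g.
Qed.

Lemma observed_rects_measurable t : observed_rects t `<=` measurable.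
Proof. by move=> A [B [mB _ ->]]; exact: measurable_grect. Qed.

Lemma observed_rects_setI t : setI_closed (observed_rects t).
Proof.
move=> A1 A2 [B1 [mB1 T1 ->]] [B2 [mB2 T2 ->]].
exists (fun k j s => B1 k j s `&` B2 k j s); split.
- by move=> k j s; apply: measurableI.
- by move=> k j s obs; rewrite T1 // T2 // setIT.
- apply/seteqP; split => w /=; first by move=> [B1w B2w] k j s; split.
  by move=> Bw; split => k j s; have [] := Bw k j s.
Qed.

Lemma observed_rects_setT t : observed_rects t setT.
Proof. by exists (fun _ _ _ => setT); split => //; apply/seteqP; split. Qed.

Lemma observed_sigma_measurable t : <<s observed_rects t >> `<=` measurable.
Proof.
apply: smallest_sub; first exact: sigma_algebra_measurable.
exact: observed_rects_measurable.
Qed.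

Lemma observed_rects_preimage t k j s B : observed t k j s -> measurable B ->
  observed_rects t ((fun w => cpair (g k j s w)) @^-1` B).
Proof.
move=> obs mB.
exists (fun k' j' s' => if [&& k' == k, j' == j & s' == s] then B else setT); split.
- by move=> k' j' s'; case: ifP.
- by move=> k' j' s' nobs; case: ifP => // /and3P[/eqP ek /eqP ej /eqP es]; move: nobs;
    rewrite ek ej es obs.
- apply/seteqP; split => w /=.
    by move=> Bw k' j' s'; case: ifP => // /and3P[/eqP -> /eqP -> /eqP ->].
  by move=> /(_ k j s); rewrite !eqxx.
Qed.

Lemma prod_indicator (t : 'I_n) (p : R) :
  \prod_(k < 2) \prod_(j < 2) \prod_(s < n)
     (if [&& k == 1, j == 1 & s == t] then p else 1) = p.
Proof.
rewrite (bigD1 1) //= [X in _ * X]big1 ?mulr1; last first.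
  by move=> k k1; apply: big1 => j _; apply: big1 => s _; rewrite (negPf k1).
rewrite (bigD1 1) //= [X in _ * X]big1 ?mulr1; last first.
  by move=> j j1; apply: big1 => s _; rewrite (negPf j1) /=.
rewrite (bigD1 t) //= eqxx [X in _ * X]big1 ?mulr1 // => s st.
by rewrite (negPf st).
Qed.

Lemma observed_rect_indep t A B0 : observed_rects t A -> measurable B0 ->
  P (A `&` G22 t @^-1` B0) = (P A * P (G22 t @^-1` B0))%E.
Proof.
move=> [B [mB unobs ->]] mB0.
(* The product formula of the iid hypothesis, with B0 placed in the slot of g22(t). *)
pose B' k j s := if [&& k == 1, j == 1 & s == t] then B0 else B k j s.
have mB' k j s : measurable (B' k j s) by rewrite /B'; case: ifP.
have B11 : B 1 1 t = setT by apply: unobs; rewrite /observed ltnn.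
have grectB' : grect B `&` G22 t @^-1` B0 = grect B'.
  apply/seteqP; split => w /=.
    by move=> [Bw B0w] k j s; rewrite /B'; case: ifP => // /and3P[/eqP -> /eqP -> /eqP ->].
  move=> B'w; split; last by have := B'w 1 1 t; rewrite /B' !eqxx.
  move=> k j s; have := B'w k j s; rewrite /B'; case: ifP => //.
  by move=> /and3P[/eqP -> /eqP -> /eqP ->]; rewrite B11.
have mG22 : measurable (G22 t @^-1` B0).
  by rewrite -[X in measurable X]setTI; exact: measurable_g.
have [_ Pprod _ _] := g_iid.
pose p := fine (P (G22 t @^-1` B0)).
have factorB' k j s : fine (P ((cpair \o g k j s) @^-1` B' k j s)) =
    fine (P ((cpair \o g k j s) @^-1` B k j s)) *
    (if [&& k == 1, j == 1 & s == t] then p else 1).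
  rewrite /B'; case: ifP => [/and3P[/eqP -> /eqP -> /eqP ->]|_]; last by rewrite mulr1.
  by rewrite B11 preimage_setT probability_setT /= mul1r.
rewrite grectB' -(fineK (fin_num_measure P _ (measurable_grect mB'))).
rewrite -(fineK (fin_num_measure P _ (measurable_grect mB))).
rewrite -(fineK (fin_num_measure P _ mG22)) -EFinM; congr (_%:E).
rewrite [LHS](Pprod B' mB') (Pprod B mB) -/p -[p in RHS](prod_indicator t) -big_split /=.
apply: eq_bigr => k _; rewrite -big_split; apply: eq_bigr => j _; rewrite -big_split.
by apply: eq_bigr => s _; rewrite factorB'.
Qed.

Lemma observed_sigma_indep t A B0 : <<s observed_rects t >> A -> measurable B0 ->
  P (A `&` G22 t @^-1` B0) = (P A * P (G22 t @^-1` B0))%E.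
Proof.
move=> sA mB0.
have mG22 : measurable (G22 t @^-1` B0).
  by rewrite -[X in measurable X]setTI; exact: measurable_g.
have p0 : (0 <= fine (P (G22 t @^-1` B0)))%R by apply/fine_ge0/measure_ge0.
(* Both sides are finite measures in A that agree on the pi-system observed_rects t. *)
have := @g_sigma_algebra_measure_unique _ _ _ (observed_rects t)
  (@observed_rects_measurable t) (fun _ => setT) (fun _ => observed_rects_setT t) _
  (mrestr P mG22) (mscale (NngNum p0) P) (@observed_rects_setI t) _ _ A sA.
move=> eqA; rewrite [LHS](_ : _ = mrestr P mG22 A) // eqA.
- transitivity ((fine (P (G22 t @^-1` B0)))%:E * P A)%E; first by [].
  by rewrite fineK ?fin_num_measure // muleC.
- by rewrite bigcup_const.
- move=> B rectB; transitivity (P (B `&` G22 t @^-1` B0)); first by [].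
  transitivity ((fine (P (G22 t @^-1` B0)))%:E * P B)%E; last by [].
  by rewrite fineK ?fin_num_measure // muleC; exact: observed_rect_indep.
- move=> k; rewrite [X in (X < _)%E](_ : _ = P (setT `&` G22 t @^-1` B0)) // setTI.
  exact: le_lt_trans (probability_le1 P mG22) (ltey _).
Qed.

Lemma observed_sections_null t d' (T' : measurableType d') (X : Omega -> T')
    (E : set (T' * (R * R))) :
  (forall B, measurable B -> <<s observed_rects t >> (X @^-1` B)) -> measurable E ->
  (forall x, P (G22 t @^-1` [set z | E (x, z)]) = 0%E) ->
  P [set w | E (X w, G22 t w)] = 0%E.
Proof.
move=> X_obs mE sections0.
have mX : measurable_fun setT X.
  by move=> _ B mB; rewrite setTI; exact: observed_sigma_measurable (X_obs B mB).
pose X' : {mfun Omega >-> T'} := mfun_Sub (mem_set mX).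
pose Z' : {mfun Omega >-> (R * R)%type} := mfun_Sub (mem_set (measurable_g 1 1 t)).
have mXZ := measurable_fun_pair mX (measurable_g 1 1 t).
pose XZ' : {mfun Omega >-> (T' * (R * R))%type} := mfun_Sub (mem_set mXZ).
have distr_prod A B : measurable A -> measurable B ->
    distribution P XZ' (A `*` B) = (distribution P X' A * distribution P Z' B)%E.
  move=> mA mB; transitivity (P (X @^-1` A `&` G22 t @^-1` B)); first by [].
  exact: observed_sigma_indep (X_obs A mA) mB.
(* By independence the joint law of (X, g22(t)) is the product law; integrate sections. *)
transitivity (distribution P XZ' E); first by [].
rewrite -(product_measure_unique distr_prod mE) /product_measure1.
rewrite (eq_integral (cst 0%E)) ?integral0 // => x _ /=.
rewrite (_ : xsection E x = [set y | E (x, y)]); first exact: sections0.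
by apply/seteqP; split => y /=; rewrite /xsection /= in_setE.
Qed.

End Independence.

Section ObservedMeasurability.
Context (R : realType) d (Omega : measurableType d) (P : probability Omega R).
Context (n : nat) (g : 'I_2 -> 'I_2 -> 'I_n -> Omega -> R[i]).
Hypothesis g_iid : iid_continuous P g.
Local Notation Obs t := (g_sigma_algebraType (observed_rects g t)).

Lemma cmeasurable_observed_g (t : 'I_n) k j s :
  observed t k j s -> cmeasurable (fun w : Obs t => g k j s w).
Proof.
by move=> obs _ B mB; rewrite setTI; apply: sub_sigma_algebra; exact: observed_rects_preimage.
Qed.

Lemma past_events_sub_observed (t s : 'I_n) :
  (s <= t)%N -> <<s past_events g s >> `<=` <<s observed_rects g t >>.
Proof.
move=> st; apply: smallest_sub; first exact: smallest_sigma_algebra.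
move=> A [k [j [s' [s's [B [mB ->]]]]]]; apply: sub_sigma_algebra.
by apply: observed_rects_preimage => //; rewrite /observed (leq_trans s's st).
Qed.

Lemma cmeasurable_observed_adapted (t : 'I_n) m
    (f : 'I_n -> ('I_2 -> 'I_2 -> 'I_n -> R[i]) -> 'rV[R[i]]_m) :
  adapted g f -> forall (s : 'I_n) (i : 'I_m), (s <= t)%N ->
  cmeasurable (fun w : Obs t => f s (gsample g w) 0 i).
Proof.
move=> f_adapted s i st _ B mB; rewrite setTI.
by apply: (past_events_sub_observed st); exact: f_adapted.
Qed.

Lemma measurable_fun_observed (t : 'I_n) d' (T' : measurableType d') (X : Omega -> T') :
  measurable_fun (setT : set (Obs t)) X -> measurable_fun (setT : set Omega) X.
Proof.
move=> mX _ B mB; apply: (observed_sigma_measurable g_iid).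
exact: mX measurableT B mB.
Qed.

End ObservedMeasurability.

Section CountableAe.
Context (R : realType) d (Omega : measurableType d) (P : probability Omega R).

Lemma ae_forall_countable (I : countType) (Q : I -> Omega -> Prop) :
  (forall i, \forall w \ae P, Q i w) -> \forall w \ae P, forall i, Q i w.
Proof.
move=> aeQ; have aeQn (k : nat) : \forall w \ae P, forall i, pickle i = k -> Q i w.
  case: (pselect (exists i : I, pickle i = k)) => [[i0 i0k]|nok]; last first.
    by apply: aeW => w i ik; exfalso; apply: nok; exists i.
  apply: filterS (aeQ i0) => w Qw i ik.
  by rewrite (pcan_inj pickleK (etrans ik (esym i0k))).
by apply: filterS (ae_foralln aeQn) => w Qw i; exact: Qw (pickle i) i erefl.
Qed.

Lemma ae_not_negligible (Q : Omega -> Prop) :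
  P.-negligible [set w | Q w] -> \forall w \ae P, ~ Q w.
Proof. by move=> [N [mN N0 QN]]; exists N; split => // w /= /contrapT /QN. Qed.

End CountableAe.

Section FreshRows.
Context (R : realType) d (Omega : measurableType d) (P : probability Omega R).
Context (n : nat) (g : 'I_2 -> 'I_2 -> 'I_n -> Omega -> R[i]).
Hypothesis g_iid : iid_continuous P g.
Local Notation C := R[i].
Local Notation Obs t := (g_sigma_algebraType (observed_rects g t)).
Context (m1 m2 : nat) (f1 : 'I_n -> ('I_2 -> 'I_2 -> 'I_n -> C) -> 'rV[C]_m1)
  (f2 : 'I_n -> ('I_2 -> 'I_2 -> 'I_n -> C) -> 'rV[C]_m2).
Hypotheses (f1_adapted : adapted g f1) (f2_adapted : adapted g f2).

Let V1 w := Vmat f1 (gsample g w).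
Let V2 w := Vmat f2 (gsample g w).
Let M2 w := blk (gsample g w) 1 (V1 w) (V2 w).
Let pad1 t w : 'rV[C]_(m1 + m2) := row_mx (row t (V1 w)) 0.
Let pad2 t w : 'rV[C]_(m1 + m2) := row_mx 0 (row t (V2 w)).

Lemma mx_cmeasurable_past_rows (t : 'I_n) :
  mx_cmeasurable (fun w : Obs t => prefix_rows t (M2 w)).
Proof.
move=> i j; under eq_fun do rewrite mxE.
case it : (i < t)%N; last exact: cmeasurable_cst.
under eq_fun do rewrite /M2 blkE mxE.
case: (fintype.split j) => k; under eq_fun do rewrite mxE.
- apply: cmeasurableM; first by apply: cmeasurable_observed_g; rewrite /observed it.
  by under eq_fun do rewrite mxE; apply: cmeasurable_observed_adapted => //; exact: ltnW.
- apply: cmeasurableM; first by apply: cmeasurable_observed_g; rewrite /observed it.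
  by under eq_fun do rewrite mxE; apply: cmeasurable_observed_adapted => //; exact: ltnW.
Qed.

Lemma mx_cmeasurable_pad1 (t : 'I_n) : mx_cmeasurable (fun w : Obs t => pad1 t w).
Proof.
move=> i j; under eq_fun do rewrite mxE.
case: (fintype.split j) => k; under eq_fun do rewrite !mxE; last exact: cmeasurable_cst.
exact: cmeasurable_observed_adapted.
Qed.

Lemma mx_cmeasurable_pad2 (t : 'I_n) : mx_cmeasurable (fun w : Obs t => pad2 t w).
Proof.
move=> i j; under eq_fun do rewrite mxE.
case: (fintype.split j) => k; under eq_fun do rewrite !mxE; first exact: cmeasurable_cst.
exact: cmeasurable_observed_adapted.
Qed.

Lemma negligible_g22_root (t : 'I_n) (a b : Omega -> C) :
  cmeasurable (a : Obs t -> C) -> cmeasurable (b : Obs t -> C) ->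
  P.-negligible [set w | b w != 0 /\ a w + g 1 1 t w * b w = 0].
Proof.
move=> ma mb; pose X w := (cpair (a w), cpair (b w)).
pose E : set (((R * R) * (R * R)) * (R * R)) :=
  [set q | toC q.1.2 != 0 /\ toC q.1.1 + toC q.2 * toC q.1.2 = 0].
have mX : measurable_fun (setT : set (Obs t)) X by exact: measurable_fun_pair.
have mE : measurable E.
  have -> : E = ~` [set q | toC q.1.2 = 0] `&` [set q | toC q.1.1 + toC q.2 * toC q.1.2 = 0].
    by apply/seteqP; split => q /= [q1 q2]; split => //; apply/eqP.
  apply: measurableI; first apply: measurableC; apply: measurable_cmeasurable_eq0.
    by apply: cmeasurable_toC; exact: measurableT_comp measurable_snd measurable_fst.
  apply: cmeasurableD; [|apply: cmeasurableM]; apply: cmeasurable_toC.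
  - exact: measurableT_comp measurable_fst measurable_fst.
  - exact: measurable_snd.
  - exact: measurableT_comp measurable_snd measurable_fst.
(* Each section is empty or the single point g22(t) = - a / b. *)
have sections0 x : P ((fun w => cpair (g 1 1 t w)) @^-1` [set z | E (x, z)]) = 0%E.
  have [bx0|bx] := eqVneq (toC x.2) 0.
    rewrite (_ : _ @^-1` _ = set0) ?measure0 //.
    by apply/seteqP; split => w //= [/negP]; rewrite bx0 eqxx.
  rewrite (_ : _ @^-1` _ = [set w | g 1 1 t w = - toC x.1 / toC x.2]) ?g_atomless //.
  apply/seteqP; split => w; rewrite /E /= cpairK.
    by move=> [_ /eqP]; rewrite addrC addr_eq0 => /eqP <-; rewrite mulfK.
  by move=> ->; split => //; rewrite divfK // addrN.
have E_null : P [set w | E (X w, cpair (g 1 1 t w))] = 0%E.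
  apply: (observed_sections_null g_iid (X := X) _ mE sections0) => B mB.
  by have := mX measurableT B mB; rewrite setTI.
have mEX : measurable [set w | E (X w, cpair (g 1 1 t w))].
  rewrite -[X in measurable X]setTI.
  exact: (measurable_fun_pair (measurable_fun_observed g_iid mX) (measurable_g g_iid 1 1 t)).
apply: (negligibleS _ (proj2 (negligibleP _ mEX) E_null)) => w /= [bw abw].
by rewrite /E /= !cpairK.
Qed.

Let minor (t : 'I_n) r (f : 'I_r -> 'I_n) (h : 'I_(r + 1) -> 'I_(m1 + m2))
  (x : 'I_n -> Omega -> 'rV[C]_(m1 + m2)) w := bordered_minor (prefix_rows t (M2 w)) f h (x t w).

Lemma negligible_minors_root (t : 'I_n) r (f : 'I_r -> 'I_n) (h : 'I_(r + 1) -> 'I_(m1 + m2)) :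
  P.-negligible [set w | (minor t f h pad1 w != 0 \/ minor t f h pad2 w != 0) /\
     g 1 0 t w * minor t f h pad1 w + g 1 1 t w * minor t f h pad2 w = 0].
Proof.
have g21_null : P.-negligible [set w | g 1 0 t w = 0].
  apply/negligibleP; last exact: g_atomless.
  exact/measurable_cmeasurable_eq0/(measurable_g g_iid).
have mminor (x : 'I_n -> Omega -> 'rV[C]_(m1 + m2)) : mx_cmeasurable (fun w : Obs t => x t w) ->
    cmeasurable (fun w : Obs t => minor t f h x w).
  by move=> mx; apply: cmeasurable_bordered_minor => //; exact: mx_cmeasurable_past_rows.
have obs21 : observed t 1 0 t by rewrite /observed ltnn !eqxx.
have root_null := negligible_g22_root
  (cmeasurableM (cmeasurable_observed_g obs21) (mminor pad1 (mx_cmeasurable_pad1 (t := t))))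
  (mminor pad2 (mx_cmeasurable_pad2 (t := t))).
apply: negligibleS (negligibleU g21_null root_null) => w /= [minor_neq0 root].
have [v0|] := eqVneq (minor t f h pad2 w) 0; last by right; split; rewrite // mulrA.
left; move: minor_neq0 root; rewrite v0 mulr0 addr0 eqxx => -[u_neq0|//].
by move/eqP; rewrite mulf_eq0 (negPf u_neq0) orbF => /eqP.
Qed.

Lemma ae_unobserved_rows_fresh : \forall w \ae P, forall t : 'I_n,
  t \notin Tset (gsample g w) (V1 w) (V2 w) -> ~~ (row t (M2 w) <= prefix_rows t (M2 w))%MS.
Proof.
have no_root : \forall w \ae P, forall (t : 'I_n) (r : nat)
    (fh : {ffun 'I_r -> 'I_n} * {ffun 'I_(r + 1) -> 'I_(m1 + m2)}),
    ~ ((minor t fh.1 fh.2 pad1 w != 0 \/ minor t fh.1 fh.2 pad2 w != 0) /\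
       g 1 0 t w * minor t fh.1 fh.2 pad1 w + g 1 1 t w * minor t fh.1 fh.2 pad2 w = 0).
  do 3!apply: ae_forall_countable => ?; exact/ae_not_negligible/negligible_minors_root.
apply: filterS no_root => w no_root t tT; apply/negP => row_past.
have comb : ((g 1 0 t w *: pad1 t w + g 1 1 t w *: pad2 t w)%R <= prefix_rows t (M2 w))%MS.
  by move: row_past; rewrite /M2 row_blk.
have uv_past : ~~ ((pad1 t w <= prefix_rows t (M2 w))%MS && (pad2 t w <= prefix_rows t (M2 w))%MS).
  by move: tT; rewrite inE !submx_lead_blkE.
have [r [f [h dep]]] := bordered_minors_dependent comb uv_past.
exact: no_root t r (f, h) dep.
Qed.

End FreshRows.

Lemma ae_g2_neq0 (R : realType) d (Omega : measurableType d) (P : probability Omega R)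
    (n : nat) (g : 'I_2 -> 'I_2 -> 'I_n -> Omega -> R[i]) :
  iid_continuous P g -> \forall w \ae P, forall (k : 'I_2) (t : 'I_n), g 1 k t w != 0.
Proof.
move=> g_iid; apply: ae_forall_countable => k; apply: ae_forall_countable => t.
apply: filterS (ae_not_negligible (Q := fun w => g 1 k t w = 0) _) => [w /eqP //|].
apply/negligibleP; last exact: g_atomless g_iid _ _ _ _.
exact/measurable_cmeasurable_eq0/(measurable_g g_iid).
Qed.

Theorem lemma5 (R : realType) (d : measure_display) (Omega : measurableType d)
  (P : probability Omega R) (n m1 m2 : nat)
  (g : 'I_2 -> 'I_2 -> 'I_n -> Omega -> R[i])
  (f1 : 'I_n -> ('I_2 -> 'I_2 -> 'I_n -> R[i]) -> 'rV[R[i]]_m1)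
  (f2 : 'I_n -> ('I_2 -> 'I_2 -> 'I_n -> R[i]) -> 'rV[R[i]]_m2) :
  (0 < m1)%N -> (0 < m2)%N ->
  iid_continuous P g ->
  causal f1 -> causal f2 ->
  adapted g f1 -> adapted g f2 ->
  let V1 := fun w => Vmat f1 (gsample g w) in
  let V2 := fun w => Vmat f2 (gsample g w) in
  let M1 := fun w => blk (gsample g w) 0 (V1 w) (V2 w) in
  let M2 := fun w => blk (gsample g w) 1 (V1 w) (V2 w) in
  let T := fun w => Tset (gsample g w) (V1 w) (V2 w) in
  let r1 := fun w => span_dim
    [set s : 'rV[R[i]]_m1 | exists l : 'rV[R[i]]_n,
       row_mx s (0 : 'rV[R[i]]_m2) = l *m M2 w] in
  let r2 := fun w => span_dim
    [set s : 'rV[R[i]]_m2 | exists l : 'rV[R[i]]_n,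
       row_mx (0 : 'rV[R[i]]_m1) s = l *m M2 w] in
  [/\ {ae P, forall w,
         (\rank (M1 w))%:Z - (\rank (M2 w))%:Z
           <= (\rank (sub_blk (T w) (gsample g w) (V1 w) (V2 w)))%:Z},
      (forall w, (\rank (sub_rows (T w) (V1 w)) <= r1 w)%N /\
                 (\rank (sub_rows (T w) (V2 w)) <= r2 w)%N)
    & {ae P, forall w,
         (r1 w)%:Z <= (\rank (M2 w))%:Z - (\rank (V2 w))%:Z /\
         (r2 w)%:Z <= (\rank (M2 w))%:Z - (\rank (V1 w))%:Z}].
Proof.
move=> _ _ g_iid _ _ f1_adapted f2_adapted V1 V2 M1 M2 T r1 r2; split.
- apply: filterS (ae_unobserved_rows_fresh g_iid f1_adapted f2_adapted) => w fresh.
  have : (\rank (M1 w) <= \rank (sub_blk (T w) (gsample g w) (V1 w) (V2 w)) + \rank (M2 w))%N.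
    by apply: mxrank_blk_le_Tset => t; rewrite inE; exact: fresh.
  lia.
- by move=> w; split; [exact: mxrank_sub_rows_Tset_left | exact: mxrank_sub_rows_Tset_right].
- apply: filterS (ae_g2_neq0 g_iid) => w g2_neq0.
  have := @span_dim_left_add_mxrank_blk _ _ _ _ (gsample g w) (V1 w) (V2 w) g2_neq0.
  have := @span_dim_right_add_mxrank_blk _ _ _ _ (gsample g w) (V1 w) (V2 w) g2_neq0.
  rewrite -/(M2 w) -/(r1 w) -/(r2 w); lia.
Qed.
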